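(* Let $\mathcal A_1,\mathcal B_1:U_1\to V_1$ be linear maps of finite-dimensional vector spaces over a field $\mathbb F$. Let $U_2=\mathcal A_1^{-1}(\operatorname{im}\mathcal B_1)$, $V_2=\operatorname{im}\mathcal B_1$, and let $\mathcal A_2,\mathcal B_2:U_2\to V_2$ be the restrictions of $\mathcal A_1,\mathcal B_1$. Similarly let $U_3=\mathcal A_2^{-1}(\operatorname{im}\mathcal B_2)$, $V_3=\operatorname{im}\mathcal B_2$. Let $(A_1,B_1)$ and $(A_2,B_2)$ be the matrix pairs of $(\mathcal A_1,\mathcal B_1)$ and $(\mathcal A_2,\mathcal B_2)$ in arbitrary bases, and take any regularizing decomposition of $(A_1,B_1)$. Then a regularizing decomposition of $(A_2,B_2)$ is obtained from it by: deleting all summands $(L_1^T,R_1^T)=(0_{10},0_{10})$ and all summands $(I_1,J_1(0))=([1],[0])$; replacing each summand $(L_k^T,R_k^T)$ with $k\ge2$ by $(L_{k-1}^T,R_{k-1}^T)$ and each summand $(I_k,J_k(0))$ with $k\ge2$ by $(I_{k-1},J_{k-1}(0))$; and leaving all other summands (the regular part $(I_r,D)$ and the summands $(J_k(0),I_k)$, $(L_k,R_k)$) unchanged. Moreover, the number of summands $(L_1^T,R_1^T)$ in the decomposition of $(A_1,B_1)$ equals $(\dim V_1-\dim V_2)-(\dim U_1-\dim U_2)$, and the number of summands $(I_1,J_1(0))$ equals $(\dim U_1-\dim U_2)-(\dim V_2-\dim V_3)$.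
   Context: $J_k(0)$ denotes the $k\times k$ nilpotent Jordan block with ones directly below the diagonal. $L_k$ and $R_k$ are the $(k-1)\times k$ matrices obtained from $I_k$ by deleting its last row, respectively its first row ($L_1=R_1$ is the $0\times1$ matrix, $L_1^T=R_1^T=0_{10}$ the $1\times 0$ matrix). Direct sums of matrix pairs are blockwise. Two matrix pairs $(A,B)$, $(A',B')$ are equivalent if $SA=A'R$, $SB=B'R$ for nonsingular $S,R$. A regularizing decomposition of a matrix pair $(A,B)$ is a direct sum $(I_r,D)\oplus(M_1,N_1)\oplus\dots\oplus(M_t,N_t)$ equivalent to $(A,B)$, in which $D$ is $r\times r$ nonsingular and each $(M_i,N_i)$ is one of $(I_k,J_k(0))$, $(J_k(0),I_k)$, $(L_k,R_k)$, $(L_k^T,R_k^T)$, $k\ge1$. *)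

From HB Require Import structures.
From mathcomp Require Import all_boot all_order all_algebra.
Set Implicit Arguments. Unset Strict Implicit. Unset Printing Implicit Defensive.
Import Order.TTheory GRing.Theory Num.Theory.
Local Open Scope ring_scope.

(* Convention: a matrix A : 'M_(m, n) represents a linear map F^n -> F^m
   acting on column vectors x : 'cV_n by x |-> A *m x (as in the paper). *)

Section Blocks.
Variable F : fieldType.

Definition Jmx (k : nat) : 'M[F]_k := \matrix_(i, j) ((i : nat) == j.+1)%:R.
Definition Lmx (k : nat) : 'M[F]_(k.-1, k) := \matrix_(i, j) ((i : nat) == j)%:R.
Definition Rmx (k : nat) : 'M[F]_(k.-1, k) := \matrix_(i, j) ((i : nat).+1 == j)%:R.

(* Descriptors of the singular summands of a regularizing decomposition *)
Inductive blk : Type :=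
  | BIJ of nat
  | BJI of nat
  | BLR of nat
  | BLRT of nat.

Definition blk_size (b : blk) : nat :=
  match b with BIJ k | BJI k | BLR k | BLRT k => k end.

Definition brows (b : blk) : nat :=
  match b with BIJ k => k | BJI k => k | BLR k => k.-1 | BLRT k => k end.
Definition bcols (b : blk) : nat :=
  match b with BIJ k => k | BJI k => k | BLR k => k | BLRT k => k.-1 end.

Definition blkA (b : blk) : 'M[F]_(brows b, bcols b) :=
  match b return 'M[F]_(brows b, bcols b) with
  | BIJ k => 1%:M | BJI k => Jmx k | BLR k => Lmx k | BLRT k => (Lmx k)^T end.
Definition blkB (b : blk) : 'M[F]_(brows b, bcols b) :=
  match b return 'M[F]_(brows b, bcols b) with
  | BIJ k => Jmx k | BJI k => 1%:M | BLR k => Rmx k | BLRT k => (Rmx k)^T end.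

Fixpoint rowsS (s : seq blk) : nat :=
  match s with [::] => 0%N | b :: s' => (brows b + rowsS s')%N end.
Fixpoint colsS (s : seq blk) : nat :=
  match s with [::] => 0%N | b :: s' => (bcols b + colsS s')%N end.

Fixpoint dsumA (s : seq blk) : 'M[F]_(rowsS s, colsS s) :=
  match s return 'M[F]_(rowsS s, colsS s) with
  | [::] => 0 | b :: s' => block_mx (blkA b) 0 0 (dsumA s') end.
Fixpoint dsumB (s : seq blk) : 'M[F]_(rowsS s, colsS s) :=
  match s return 'M[F]_(rowsS s, colsS s) with
  | [::] => 0 | b :: s' => block_mx (blkB b) 0 0 (dsumB s') end.

(* Equivalence of matrix pairs: S A = A' R, S B = B' R with S, R nonsingular
   (this forces equal sizes, expressed by the equations em, en). *)
Definition pair_equiv m n m' n' (A B : 'M[F]_(m, n)) (A' B' : 'M[F]_(m', n')) :=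
  exists (em : m' = m) (en : n' = n), exists (S : 'M[F]_m) (R : 'M[F]_n),
    [/\ S \in unitmx, R \in unitmx,
        S *m A = castmx (em, en) A' *m R & S *m B = castmx (em, en) B' *m R].

Definition regdec m n (A B : 'M[F]_(m, n)) (r : nat) (D : 'M[F]_r) (s : seq blk) :=
  [/\ D \in unitmx, all (fun b => 0 < blk_size b)%N s &
      pair_equiv A B (block_mx (1%:M : 'M[F]_r) 0 0 (dsumA s))
                     (block_mx D 0 0 (dsumB s))].

End Blocks.

Definition step_blk (b : blk) : seq blk :=
  match b with
  | BLRT 1 => [::]
  | BIJ 1 => [::]
  | BLRT k => [:: BLRT k.-1]
  | BIJ k => [:: BIJ k.-1]
  | b => [:: b]
  end.
Definition step_blks (s : seq blk) : seq blk := flatten (map step_blk s).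

Definition is_LT1 (b : blk) : bool := if b is BLRT 1 then true else false.
Definition is_IJ1 (b : blk) : bool := if b is BIJ 1 then true else false.

(* Passing from (A1, B1) to (A2, B2) commutes with equivalence of pairs and
   with direct sums, so it suffices to compute it on the canonical form
   (I_r, D) (+) (+)_b (blkA b, blkB b) summand by summand. When B has a right
   inverse (the regular part, (J_k(0), I_k), (L_k, R_k)) nothing changes, since
   then im B is everything; for (I_k, J_k(0)) and (L_k^T, R_k^T) the subspaces
   U_2, V_2 are spanned by the last basis vectors, and the restriction is the
   same kind of summand of size k - 1. The counting formulas then read off the
   sizes of the canonical forms of (A1, B1), (A2, B2), and of (A3, B3), whose
   number of rows is rank B2. *)

From mathcomp Require Import all_boot all_algebra.
From mathcomp Require Import zify.
Set Implicit Arguments. Unset Strict Implicit. Unset Printing Implicit Defensive.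
Import GRing.Theory.
Local Open Scope ring_scope.

Section Restriction.
Variable F : fieldType.

Definition col_free m n (X : 'M[F]_(m, n)) := forall c : 'cV_n, X *m c = 0 -> c = 0.

Definition same_colspan m a b (X : 'M[F]_(m, a)) (Y : 'M[F]_(m, b)) :=
  forall y : 'cV_m, (exists c, y = X *m c) <-> (exists c, y = Y *m c).

Definition restriction_bases m n u v (A B : 'M[F]_(m, n)) (P : 'M_(n, u)) (Q : 'M_(m, v)) :=
  [/\ col_free P, col_free Q,
      forall x : 'cV_n, (exists z : 'cV_n, A *m x = B *m z) <-> (exists c, x = P *m c)
    & same_colspan B Q].

Definition restricts_to m n u v (A B : 'M[F]_(m, n)) (A2 B2 : 'M[F]_(v, u)) :=
  exists P Q, [/\ restriction_bases A B P Q, Q *m A2 = A *m P & Q *m B2 = B *m P].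

Lemma col_free_cancel m n p (X : 'M[F]_(m, n)) (M N : 'M_(n, p)) :
  col_free X -> X *m M = X *m N -> M = N.
Proof.
move=> Xfree eqXMN; apply/matrixP => i j.
have /Xfree/matrixP/(_ i 0) : X *m (col j M - col j N) = 0.
  by rewrite mulmxBr !colE !mulmxA eqXMN subrr.
by rewrite !mxE => /eqP; rewrite subr_eq0 => /eqP.
Qed.

Lemma col_free_inverse m n (X : 'M[F]_(m, n)) (Y : 'M_(n, m)) :
  Y *m X = 1%:M -> col_free X.
Proof. by move=> YX1 c Xc0; rewrite -[c]mul1mx -YX1 -mulmxA Xc0 mulmx0. Qed.

Lemma col_free_rank m n (X : 'M[F]_(m, n)) : col_free X -> \rank X = n.
Proof.
move=> Xfree; rewrite -mxrank_tr; apply/eqP/inj_row_free => v vX0.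
apply/trmx_inj; rewrite trmx0; apply: Xfree.
by rewrite -[X]trmxK -trmx_mul vX0 trmx0.
Qed.

Lemma colspan_sub_factor m a b (X : 'M[F]_(m, a)) (Y : 'M_(m, b)) :
  (forall y : 'cV_m, (exists c, y = X *m c) -> exists c, y = Y *m c) ->
  exists T, X = Y *m T.
Proof.
move=> subXY.
have /fin_all_exists [f Xf] : forall j, exists c, col j X = Y *m c.
  by move=> j; apply: subXY; exists (delta_mx j 0); rewrite colE.
exists (\matrix_(i, j) f j i 0); apply/matrixP => i j.
have /matrixP/(_ i 0) := Xf j.
by rewrite !mxE => ->; apply: eq_bigr => k _; rewrite !mxE.
Qed.

Lemma same_colspan_unit m a b (X : 'M[F]_(m, a)) (Y : 'M_(m, b)) :
  col_free X -> col_free Y -> same_colspan X Y ->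
  exists (e : b = a) (T : 'M_a), T \in unitmx /\ X = castmx (erefl, e) Y *m T.
Proof.
move=> Xfree Yfree eqXY.
have [T XYT] := colspan_sub_factor (fun y => (eqXY y).1).
have [T' YXT'] := colspan_sub_factor (fun y => (eqXY y).2).
have T'T : T' *m T = 1%:M by apply: (col_free_cancel Xfree); rewrite mulmx1 mulmxA -YXT'.
have TT' : T *m T' = 1%:M by apply: (col_free_cancel Yfree); rewrite mulmx1 mulmxA -XYT.
have eab : b = a.
  apply/eqP; rewrite eqn_leq -{1}(mxrank1 F b) -{2}(mxrank1 F a) -TT' -T'T.
  by rewrite !(leq_trans (mxrankM_maxr _ _)) ?rank_leq_row.
subst b.
by exists erefl, T; rewrite castmx_id (mulmx1_unit TT').1.
Qed.

Lemma same_colspan_rank m n b (B : 'M[F]_(m, n)) (Y : 'M_(m, b)) :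
  col_free Y -> same_colspan B Y -> \rank B = b.
Proof.
move=> Yfree eqBY; rewrite -(col_free_rank Yfree).
have [T BYT] := colspan_sub_factor (fun y => (eqBY y).1).
have [T' YBT'] := colspan_sub_factor (fun y => (eqBY y).2).
by apply/eqP; rewrite eqn_leq {1}BYT {3}YBT' !mxrankM_maxl.
Qed.

Lemma pair_equiv_rank m n m' n' (A B : 'M[F]_(m, n)) (A' B' : 'M[F]_(m', n')) :
  pair_equiv A B A' B' -> \rank B = \rank B'.
Proof.
case=> em [en [S [R [Su Ru _]]]]; subst m n; rewrite castmx_id => SB.
have Rfree : row_free R by rewrite row_free_unit.
have Sfree : row_free S^T by rewrite row_free_unit unitmx_tr.
by rewrite -(mxrankMfree B' Rfree) -SB -(mxrank_tr (S *m B)) trmx_mul mxrankMfree // mxrank_tr.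
Qed.

Lemma restricts_to_rank m n u v (A B : 'M[F]_(m, n)) (A2 B2 : 'M[F]_(v, u)) :
  restricts_to A B A2 B2 -> \rank B = v.
Proof. by case=> P [Q [[_ Qfree _ spanQ] _ _]]; apply: same_colspan_rank spanQ. Qed.

Lemma colspan_unit_mul k l (S : 'M[F]_k) (X : 'M_(k, l)) (y : 'cV_k) :
  S \in unitmx -> (exists c, S *m y = X *m c) <-> (exists c, y = invmx S *m X *m c).
Proof.
move=> Su; split=> -[c yc]; exists c; first by rewrite -mulmxA -yc mulKmx.
by rewrite yc !mulmxA mulmxV // mul1mx.
Qed.

Lemma colspan_equiv_mul m n (S : 'M[F]_m) (R : 'M[F]_n) (B B' : 'M_(m, n)) (y : 'cV_m) :
  S \in unitmx -> R \in unitmx -> S *m B = B' *m R ->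
  (exists z, y = B *m z) <-> (exists z, S *m y = B' *m z).
Proof.
move=> Su Ru SB; split=> -[z yz]; first by exists (R *m z); rewrite yz !mulmxA SB.
exists (invmx R *m z); apply: (can_inj (mulKmx Su)).
by rewrite yz !mulmxA SB mulmxK.
Qed.

Lemma restricts_to_equiv m n m' n' u v (A B : 'M[F]_(m, n)) (A' B' : 'M[F]_(m', n'))
    (A2 B2 : 'M[F]_(v, u)) :
  pair_equiv A B A' B' -> restricts_to A' B' A2 B2 -> restricts_to A B A2 B2.
Proof.
case=> em [en [S [R [Su Ru]]]]; subst m n; rewrite !castmx_id => SA SB.
case=> P [Q [[Pfree Qfree preP spanQ] QA2 QB2]].
exists (invmx R *m P), (invmx S *m Q); split; last 2 first.
- by rewrite -mulmxA QA2 -[A](mulKmx Su) SA !mulmxA mulmxK.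
- by rewrite -mulmxA QB2 -[B](mulKmx Su) SB !mulmxA mulmxK.
split.
- by move=> c /(congr1 (mulmx R)); rewrite mulmx0 -mulmxA mulKVmx // => /Pfree.
- by move=> c /(congr1 (mulmx S)); rewrite mulmx0 -mulmxA mulKVmx // => /Qfree.
- move=> x; apply: (iff_trans _ (colspan_unit_mul _ _ Ru)).
  apply: (iff_trans _ (preP _)); rewrite mulmxA -SA -mulmxA.
  exact: (colspan_equiv_mul (A *m x) Su Ru SB).
- move=> y; apply: (iff_trans (colspan_equiv_mul y Su Ru SB)).
  apply: (iff_trans (spanQ _)); exact: colspan_unit_mul.
Qed.

Lemma restricts_to_unique m n u v u' v' (A B : 'M[F]_(m, n)) (P : 'M_(n, u)) (Q : 'M_(m, v))
    (A2 B2 : 'M[F]_(v, u)) (A2' B2' : 'M[F]_(v', u')) :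
  restriction_bases A B P Q -> Q *m A2 = A *m P -> Q *m B2 = B *m P ->
  restricts_to A B A2' B2' -> pair_equiv A2 B2 A2' B2'.
Proof.
case=> Pfree Qfree preP spanQ QA2 QB2 [P' [Q' [[P'free Q'free preP' spanQ'] QA2' QB2']]].
have samePP' : same_colspan P P' := fun x => iff_trans (iff_sym (preP x)) (preP' x).
have sameQQ' : same_colspan Q Q' := fun y => iff_trans (iff_sym (spanQ y)) (spanQ' y).
have [eu [T [Tu PT]]] := same_colspan_unit Pfree P'free samePP'.
have [ev [W [Wu QW]]] := same_colspan_unit Qfree Q'free sameQQ'.
subst u' v'; rewrite castmx_id in PT QW.
exists erefl, erefl, W, T; rewrite !castmx_id; split => //.
- by apply: (col_free_cancel Q'free); rewrite mulmxA -QW QA2 PT mulmxA -QA2' mulmxA.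
- by apply: (col_free_cancel Q'free); rewrite mulmxA -QW QB2 PT mulmxA -QB2' mulmxA.
Qed.

Lemma same_colspan_mulr m n p (X : 'M[F]_(m, n)) (Y : 'M_(n, p)) (Z : 'M_(p, n)) :
  Y *m Z = 1%:M -> same_colspan (X *m Y) X.
Proof.
move=> YZ1 y; split=> -[c ->]; first by exists (Y *m c); rewrite mulmxA.
by exists (Z *m c); rewrite mulmxA -(mulmxA X) YZ1 mulmx1.
Qed.

Lemma restricts_to_rinv m n (A B : 'M[F]_(m, n)) (Z : 'M_(n, m)) :
  B *m Z = 1%:M -> restricts_to A B A B.
Proof.
move=> BZ1; have spanB := same_colspan_mulr 1%:M BZ1; rewrite mul1mx in spanB.
exists 1%:M, 1%:M; split; rewrite ?mulmx1 ?mul1mx //; split.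
- by move=> c; rewrite mul1mx.
- by move=> c; rewrite mul1mx.
- move=> x; split=> _; first by exists x; rewrite mul1mx.
  by apply/(spanB (A *m x)); exists (A *m x); rewrite mul1mx.
- exact: spanB.
Qed.

Lemma mul_block_diag_col m1 m2 n1 n2 p (X : 'M[F]_(m1, n1)) (Y : 'M_(m2, n2))
    (u : 'M_(n1, p)) (v : 'M_(n2, p)) :
  block_mx X 0 0 Y *m col_mx u v = col_mx (X *m u) (Y *m v).
Proof. by rewrite mul_block_col !mul0mx addr0 add0r. Qed.

Lemma col_free_block m1 m2 n1 n2 (X : 'M[F]_(m1, n1)) (Y : 'M_(m2, n2)) :
  col_free X -> col_free Y -> col_free (block_mx X 0 0 Y).
Proof.
move=> Xfree Yfree c; rewrite -[c]vsubmxK mul_block_diag_col => /eqP.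
by rewrite col_mx_eq0 => /andP[/eqP/Xfree-> /eqP/Yfree->]; rewrite col_mx0.
Qed.

Lemma colspan_block m1 m2 n1 n2 (X : 'M[F]_(m1, n1)) (Y : 'M_(m2, n2))
    (y1 : 'cV_m1) (y2 : 'cV_m2) :
  (exists z, col_mx y1 y2 = block_mx X 0 0 Y *m z) <->
  (exists z1, y1 = X *m z1) /\ (exists z2, y2 = Y *m z2).
Proof.
split=> [[z]|[[z1 ->] [z2 ->]]]; last by exists (col_mx z1 z2); rewrite mul_block_diag_col.
by rewrite -[z]vsubmxK mul_block_diag_col => /eq_col_mx[-> ->]; split; eexists.
Qed.

Lemma restricts_to_block m1 n1 u1 v1 m2 n2 u2 v2 (A B : 'M[F]_(m1, n1))
    (A2 B2 : 'M[F]_(v1, u1)) (C D : 'M[F]_(m2, n2)) (C2 D2 : 'M[F]_(v2, u2)) :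
  restricts_to A B A2 B2 -> restricts_to C D C2 D2 ->
  restricts_to (block_mx A 0 0 C) (block_mx B 0 0 D)
               (block_mx A2 0 0 C2) (block_mx B2 0 0 D2).
Proof.
case=> P [Q [[Pfree Qfree preP spanQ] QA2 QB2]].
case=> P' [Q' [[P'free Q'free preP' spanQ'] Q'C2 Q'D2]].
exists (block_mx P 0 0 P'), (block_mx Q 0 0 Q'); split; last 2 first.
- by rewrite !mulmx_block !mulmx0 !mul0mx !addr0 !add0r QA2 Q'C2.
- by rewrite !mulmx_block !mulmx0 !mul0mx !addr0 !add0r QB2 Q'D2.
split; try exact: col_free_block.
- move=> x; rewrite -[x]vsubmxK mul_block_diag_col.
  apply: (iff_trans (colspan_block _ _ _ _)); apply: iff_sym.
  apply: (iff_trans (colspan_block _ _ _ _)).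
  by split=> -[/preP h1 /preP' h2].
- move=> y; rewrite -[y]vsubmxK; apply: (iff_trans (colspan_block _ _ _ _)).
  apply: iff_sym; apply: (iff_trans (colspan_block _ _ _ _)).
  by split=> -[/spanQ h1 /spanQ' h2].
Qed.

Lemma block_mx_0x0 p q (X : 'M[F]_0) (Y : 'M_(p, q)) : block_mx X 0 0 Y = Y.
Proof.
apply/matrixP => i j; rewrite !mxE; case: splitP => [[]//|i' ei].
rewrite !mxE; case: splitP => [[]//|j' ej].
by congr (Y _ _); apply: val_inj.
Qed.

Lemma sum_ord_eqn n b (f : nat -> F) :
  \sum_(l < n) (((l : nat) == b)%:R * f l) = if (b < n)%N then f b else 0.
Proof.
case: ifP => [bn | /negbT bn].
  rewrite (bigD1 (Ordinal bn)) //= eqxx mul1r big1 ?addr0 // => l lb.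
  rewrite (_ : (l : nat) == b = false) ?mul0r //.
  by apply/negbTE; apply: contra lb => /eqP lb; apply/eqP/val_inj.
rewrite big1 // => l _; rewrite (_ : (l : nat) == b = false) ?mul0r //.
by apply/negbTE; apply: contra bn => /eqP <-.
Qed.

Lemma Jmx_trRmx_Lmx k : Jmx F k = (Rmx F k)^T *m Lmx F k.
Proof.
apply/matrixP => i j; rewrite !mxE.
under eq_bigr => l _ do rewrite !mxE mulrC.
rewrite (sum_ord_eqn _ _ (fun l => (l.+1 == i)%:R)) eq_sym.
by case: ifP => // jk; case: eqP => // ij; move: (ltn_ord i) (ltn_ord j) jk; lia.
Qed.

Lemma Lmx_trLmx k : Lmx F k *m (Lmx F k)^T = 1%:M.
Proof.
apply/matrixP => i j; rewrite !mxE.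
under eq_bigr => l _ do rewrite !mxE (eq_sym (i : nat)) (eq_sym (j : nat)) mulrC.
rewrite (sum_ord_eqn _ _ (fun l => (l == i)%:R)) ifT 1?eq_sym //.
by move: (ltn_ord j); lia.
Qed.

Lemma Rmx_trRmx k : Rmx F k *m (Rmx F k)^T = 1%:M.
Proof.
apply/matrixP => i j; rewrite !mxE.
under eq_bigr => l _ do rewrite !mxE (eq_sym (i : nat).+1) (eq_sym (j : nat).+1) mulrC.
rewrite (sum_ord_eqn _ _ (fun l => (l == i.+1)%:R)) ifT 1?eqSS 1?eq_sym //.
by move: (ltn_ord j); lia.
Qed.

Lemma Lmx_trRmx k : Lmx F k *m (Rmx F k)^T = Jmx F k.-1.
Proof.
apply/matrixP => i j; rewrite !mxE.
under eq_bigr => l _ do rewrite !mxE (eq_sym (j : nat).+1) mulrC.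
rewrite (sum_ord_eqn _ _ (fun l => ((i : nat) == l)%:R)) ifT 1?eq_sym //.
by move: (ltn_ord j); lia.
Qed.

Lemma Rmx_Lmx_pred k : Rmx F k.-1 *m Lmx F k = Lmx F k.-1 *m Rmx F k.
Proof.
apply/matrixP => i j; rewrite !mxE.
under eq_bigr => l _ do rewrite !mxE (eq_sym (i : nat).+1).
under [RHS]eq_bigr => l _ do rewrite !mxE (eq_sym (i : nat)).
rewrite (sum_ord_eqn _ _ (fun l => (l == j)%:R)).
rewrite (sum_ord_eqn _ _ (fun l => (l.+1 == j)%:R)) !ifT 1?eq_sym //.
all: by move: (ltn_ord i); lia.
Qed.

Lemma same_colspan_Jmx k : same_colspan (Jmx F k) (Rmx F k)^T.
Proof. by rewrite Jmx_trRmx_Lmx; apply: same_colspan_mulr (Lmx_trLmx k). Qed.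

(* Here U_2 = V_2 = im J_k(0) is spanned by e_2, ..., e_k, the columns of R_k^T. *)
Lemma restricts_to_IJ k :
  restricts_to (1%:M : 'M[F]_k) (Jmx F k) (1%:M : 'M_k.-1) (Jmx F k.-1).
Proof.
exists (Rmx F k)^T, (Rmx F k)^T; split.
- split; try exact: col_free_inverse (Rmx_trRmx k); last exact: same_colspan_Jmx.
  by move=> x; rewrite mul1mx; apply: same_colspan_Jmx.
- by rewrite mul1mx mulmx1.
- by rewrite [Jmx F k]Jmx_trRmx_Lmx -mulmxA Lmx_trRmx.
Qed.

Lemma restricts_to_LRT k :
  restricts_to (Lmx F k)^T (Rmx F k)^T (Lmx F k.-1)^T (Rmx F k.-1)^T.
Proof.
exists (Rmx F k.-1)^T, (Rmx F k)^T; split => //; last by rewrite -!trmx_mul Rmx_Lmx_pred.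
split; try exact: col_free_inverse (Rmx_trRmx _); last by [].
move=> x; split=> [[z LxRz] | [c ->]].
  exists (Lmx F k.-1 *m z).
  by rewrite mulmxA -Jmx_trRmx_Lmx -Lmx_trRmx -mulmxA -LxRz mulmxA Lmx_trLmx mul1mx.
by exists ((Lmx F k.-1)^T *m c); rewrite !mulmxA -!trmx_mul Rmx_Lmx_pred.
Qed.

Lemma restricts_to_dsum s :
  restricts_to (dsumA F s) (dsumB F s) (dsumA F (step_blks s)) (dsumB F (step_blks s)).
Proof.
elim: s => [|b s IH]; first by apply: (@restricts_to_rinv _ _ _ _ 0); apply/matrixP => -[].
have restr_self X Y Z : Y *m Z = 1%:M -> restricts_to (block_mx X 0 0 (dsumA F s))
    (block_mx Y 0 0 (dsumB F s)) (block_mx X 0 0 (dsumA F (step_blks s)))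
    (block_mx Y 0 0 (dsumB F (step_blks s))).
  by move=> YZ1; apply: restricts_to_block IH; apply: restricts_to_rinv YZ1.
case: b => [[|[|k]] | k | k | [|[|k]]].
- exact: restricts_to_block (restricts_to_IJ 0) IH.
- by have := restricts_to_block (restricts_to_IJ 1) IH; rewrite !block_mx_0x0.
- exact: restricts_to_block (restricts_to_IJ k.+2) IH.
- exact: restr_self (mulmx1 _).
- exact: restr_self (Rmx_trRmx k).
- exact: restricts_to_block (restricts_to_LRT 0) IH.
- by have := restricts_to_block (restricts_to_LRT 1) IH; rewrite !block_mx_0x0.
- exact: restricts_to_block (restricts_to_LRT k.+2) IH.
Qed.

Lemma restricts_to_regular_form r (D : 'M[F]_r) s : D \in unitmx ->
  restricts_to (block_mx 1%:M 0 0 (dsumA F s)) (block_mx D 0 0 (dsumB F s))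
    (block_mx 1%:M 0 0 (dsumA F (step_blks s))) (block_mx D 0 0 (dsumB F (step_blks s))).
Proof.
by move=> Du; apply: restricts_to_block (restricts_to_dsum s); apply: restricts_to_rinv (mulmxV Du).
Qed.
End Restriction.

Lemma rowsS_cat (s1 s2 : seq blk) : rowsS (s1 ++ s2) = (rowsS s1 + rowsS s2)%N.
Proof. by elim: s1 => //= b s1 ->; rewrite addnA. Qed.

Lemma colsS_cat (s1 s2 : seq blk) : colsS (s1 ++ s2) = (colsS s1 + colsS s2)%N.
Proof. by elim: s1 => //= b s1 ->; rewrite addnA. Qed.

Lemma step_blks_cons b s : step_blks (b :: s) = step_blk b ++ step_blks s.
Proof. by []. Qed.

Lemma step_blks_cat (s1 s2 : seq blk) :
  step_blks (s1 ++ s2) = step_blks s1 ++ step_blks s2.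
Proof. by rewrite /step_blks map_cat flatten_cat. Qed.

Lemma step_blks_pos s : all (fun b => 0 < blk_size b)%N s ->
  all (fun b => 0 < blk_size b)%N (step_blks s).
Proof.
elim: s => //= b s IH /andP[b_pos s_pos]; rewrite step_blks_cons all_cat IH // andbT.
by case: b b_pos => -[|[|k]].
Qed.

(* The counting identities are stated additively to avoid truncated subtraction. *)
Lemma count_LT1_dims s :
  (count is_LT1 s + rowsS (step_blks s) + colsS s
   = rowsS s + colsS (step_blks s))%N.
Proof.
elim: s => //= b s IH; rewrite step_blks_cons rowsS_cat colsS_cat.
by case: b => -[|[|k]] /=; lia.
Qed.

Lemma count_IJ1_dims s :
  (count is_IJ1 s + colsS (step_blks s) + rowsS (step_blks s)
   = colsS s + rowsS (step_blks (step_blks s)))%N.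
Proof.
elim: s => //= b s IH; rewrite step_blks_cons step_blks_cat !rowsS_cat !colsS_cat.
by case: b => -[|[|[|k]]] /=; lia.
Qed.

Unset Implicit Arguments.

Theorem lemma1 (F : fieldType) (m n : nat) (A1 B1 : 'M[F]_(m, n))
  (u2 v2 : nat) (P : 'M[F]_(n, u2)) (Q : 'M[F]_(m, v2))
  (A2 B2 : 'M[F]_(v2, u2))
  (P_indep : forall c : 'cV[F]_u2, P *m c = 0 -> c = 0)
  (P_span : forall x : 'cV[F]_n,
      (exists z : 'cV[F]_n, A1 *m x = B1 *m z) <-> (exists c : 'cV[F]_u2, x = P *m c))
  (Q_indep : forall c : 'cV[F]_v2, Q *m c = 0 -> c = 0)
  (Q_span : forall y : 'cV[F]_m,
      (exists z : 'cV[F]_n, y = B1 *m z) <-> (exists c : 'cV[F]_v2, y = Q *m c))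
  (hA2 : Q *m A2 = A1 *m P) (hB2 : Q *m B2 = B1 *m P)
  (r : nat) (D : 'M[F]_r) (s : seq blk) :
  regdec A1 B1 D s ->
  [/\ regdec A2 B2 D (step_blks s),
      (count is_LT1 s)%:Z = ((m%:Z - v2%:Z) - (n%:Z - u2%:Z))%R &
      (count is_IJ1 s)%:Z = ((n%:Z - u2%:Z) - (v2%:Z - (\rank B2)%:Z))%R].
Proof.
move=> [Du s_pos eqAB].
have restr1 := restricts_to_equiv eqAB (restricts_to_regular_form s Du).
have eq2 := restricts_to_unique (And4 P_indep Q_indep P_span Q_span) hA2 hB2 restr1.
have rankB2 : \rank B2 = (r + rowsS (step_blks (step_blks s)))%N.
  rewrite (pair_equiv_rank eq2).
  exact: restricts_to_rank (restricts_to_regular_form (step_blks s) Du).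
have [em [en _]] := eqAB; have [ev [eu _]] := eq2.
split; first by split; [| exact: step_blks_pos |].
- by have := count_LT1_dims s; lia.
- by have := count_IJ1_dims s; rewrite rankB2; lia.
Qed.
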